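(* The approximate loss of the pseudo-network is convex with respect to the trainable parameters; consequently, for all $t\in[T]$, for any parameters $\theta^*$ and any training set $\mathcal X$ of points $x$ with $\|x\|_2\le\frac12$, $$\tilde L(\nabla g^{(t)},\mathcal X)-\tilde L(\nabla g^*,\mathcal X)\le\big\langle\nabla_\theta\tilde L(\nabla g^{(t)},\mathcal X),\ \theta^{(t)}-\theta^*\big\rangle,$$ where $g^{(t)}$ and $g^*$ denote the pseudo-network models with parameters $\theta^{(t)}$ and $\theta^*$ respectively.
   Context: UNF pseudo-network setting. For $\|x_{1:i}\|_2\le1$, $\hat x_{1:i}=(x_1,\dots,x_i,\sqrt{1-\|x_{1:i}\|_2^2})$. $\sigma'(u)=\mathbf 1\{u\ge0\}$; $\phi(u)=e^u$ ($u<0$), $u+1$ ($u\ge0$). Fixed initial parameters $a_{i,r}\in\mathbb{R}$, $\bar w_{i,r}\in\mathbb{R}^{i+1}$, $\bar b_{i,r}\in\mathbb{R}$ ($i\in[d],r\in[m]$); parameters $\theta=(\theta_1,\dots,\theta_d)$, $\theta_i=(w_{i,r},b_{i,r})_{r\in[m]}$. Pseudo-network $P(x_{1:i};\theta_i)=\sum_ra_{i,r}\sigma'(\langle\bar w_{i,r},\hat x_{1:i}\rangle+\bar b_{i,r})(\langle\bar w_{i,r}+w_{i,r},\hat x_{1:i}\rangle+\bar b_{i,r}+b_{i,r})$ and $\frac{\partial g_i}{\partial x_i}(x_{1:i})=\phi(P(x_{1:i};\theta_i))$. Quadrature with $Q$ points: $\Delta_{x_i}=(x_i+1)/Q$, $q^{(j)}_i=(x_1,\dots,x_{i-1},-1+j\Delta_{x_i})$.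 Approximate loss $\tilde L(\nabla g,x)=\sum_{i=1}^d\big(\sum_{j=1}^Q\Delta_{x_i}\phi(P(q^{(j)}_i;\theta_i))-\log\phi(P(x_{1:i};\theta_i))\big)$ and $\tilde L(\nabla g,\mathcal X)=\frac1{|\mathcal X|}\sum_{x\in\mathcal X}\tilde L(\nabla g,x)$. $\theta^{(t)}$, $t\in[T]$, is any sequence of parameters (in the paper, SGD iterates). *)

From HB Require Import structures.
From mathcomp Require Import all_boot all_order all_algebra.
From mathcomp Require Import all_classical all_reals all_analysis.
Set Implicit Arguments. Unset Strict Implicit. Unset Printing Implicit Defensive.
Import Order.TTheory GRing.Theory Num.Theory.
Local Open Scope ring_scope.

(* Indexing conventions (0-based): the paper's index i in [d] is our
   i : 'I_d, so x_{1:i} (paper) = coordinates 0..i (i.+1 coordinates), and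
   \hat x_{1:i} has i.+2 coordinates; neurons r in [m] are r : 'I_m. *)

Record Init (R : realType) (d m : nat) := MkInit {
  a_init : 'I_d -> 'I_m -> R;
  wbar : forall i : 'I_d, 'I_m -> 'I_(i.+2) -> R;
  bbar : 'I_d -> 'I_m -> R }.

(* Index set of the trainable parameters theta = (theta_1,...,theta_d),
   theta_i = (w_{i,r}, b_{i,r})_r : a parameter is a triple (i, r, c) with
   c = Some k the k-th coordinate of w_{i,r} in R^{i+1} (0-based, k < i.+2),
   and c = None the bias b_{i,r}. *)
Definition PIdx (d m : nat) : finType :=
  {i : 'I_d & ('I_m * option 'I_(i.+2))%type}.

Definition Param (R : realType) (d m : nat) := {ffun PIdx d m -> R}.

Definition w_of (R : realType) d m (th : Param R d m) (i : 'I_d) (r : 'I_m)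
  (k : 'I_(i.+2)) : R :=
  th (existT (fun i : 'I_d => ('I_m * option 'I_(i.+2))%type) i (r, Some k)).
Definition b_of (R : realType) d m (th : Param R d m) (i : 'I_d) (r : 'I_m) : R :=
  th (existT (fun i : 'I_d => ('I_m * option 'I_(i.+2))%type) i (r, None)).

(* Points of R^d, read as a coordinate function on nat (0 outside [0,d)). *)
Definition coord (R : realType) d (x : 'rV[R]_d) (k : nat) : R :=
  if @insub _ _ 'I_d k is Some k' then x ord0 k' else 0.

Definition norm2 (R : realType) d (x : 'rV[R]_d) : R :=
  Num.sqrt (\sum_(k < d) x ord0 k ^+ 2).

(* \hat y_{1:i} = (y_1..y_i, sqrt(1 - ||y_{1:i}||^2)) for our index i
   (i.+1 coordinates y 0 .. y i, then the extra one). *)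
Definition hatx (R : realType) (y : nat -> R) (i : nat) (k : 'I_(i.+2)) : R :=
  if (k < i.+1)%N then y k else Num.sqrt (1 - \sum_(l < i.+1) y l ^+ 2).

Definition sigma' (R : realType) (u : R) : R := if 0 <= u then 1 else 0.

Definition phi (R : realType) (u : R) : R := if u < 0 then expR u else u + 1.

Definition pseudo (R : realType) d m (I0 : Init R d m) (th : Param R d m)
  (i : 'I_d) (y : nat -> R) : R :=
  \sum_(r < m)
    a_init I0 i r
    * sigma' (\sum_(k < i.+2) wbar I0 r k * hatx y k + bbar I0 i r)
    * (\sum_(k < i.+2) (wbar I0 r k + w_of th r k) * hatx y k
       + bbar I0 i r + b_of th i r).

(* Quadrature step and points for coordinate i. *)
Definition Delta (R : realType) (Q : nat) (y : nat -> R) (i : nat) : R :=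
  (y i + 1) / Q%:R.
Definition qpt (R : realType) (Q : nat) (y : nat -> R) (i j : nat) : nat -> R :=
  fun k => if k == i then -1 + j%:R * Delta Q y i else y k.

Definition Lx (R : realType) d m (Q : nat) (I0 : Init R d m) (th : Param R d m)
  (x : 'rV[R]_d) : R :=
  let y := coord x in
  \sum_(i < d)
    (\sum_(1 <= j < Q.+1) Delta Q y i * phi (pseudo I0 th i (qpt Q y i j))
     - ln (phi (pseudo I0 th i y))).

Definition LX (R : realType) d m (Q : nat) (I0 : Init R d m)
  (X : seq 'rV[R]_d) (th : Param R d m) : R :=
  (\sum_(x <- X) Lx Q I0 th x) / (size X)%:R.

Definition partial (R : realType) d m (F : Param R d m -> R) (th : Param R d m)
  (k : PIdx d m) : R :=
  derive1 (fun s : R => F [ffun l => th l + (if l == k then s else 0)]) 0.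

Definition grad (R : realType) d m (F : Param R d m -> R) (th : Param R d m) :
  Param R d m := [ffun k => partial F th k].

Definition pdot (R : realType) d m (u v : Param R d m) : R :=
  \sum_(k : PIdx d m) u k * v k.

From Pilot Require Import Defs.
From HB Require Import structures.
From mathcomp Require Import all_boot all_order all_algebra.
From mathcomp Require Import all_classical all_reals all_analysis.
From mathcomp Require Import ring lra.
Import Order.TTheory GRing.Theory Num.Theory numFieldNormedType.Exports.

Local Open Scope ring_scope.

(* Every summand of the loss is [phi] or [- ln o phi] applied to the
   pseudo-network, weighted by a quadrature step.  Both outer functions are
   convex on the whole line, with continuous slopes exp (min u 0) and
   -1 / (max u 0 + 1); the pseudo-network is affine in theta because the gates
   sigma' only see the frozen initial weights; and the steps (x_i + 1) / Q are
   nonnegative because ||x|| <= 1/2 forces x_i >= -1.  Such a sum F satisfies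
   F th + <G th, th' - th> <= F th' where G th is the vector of partial
   derivatives of F at th, which gives both convexity and the bound. *)

Section RealTangents.
Context {R : realType}.

Definition tangents_below (h h' : R -> R) :=
  forall a b, h a + h' a * (b - a) <= h b.

(* The difference quotient at u lies between k' u and k' z, and continuity of
   k' at u squeezes it. *)
Lemma is_derive_tangents_below (k k' : R -> R) (u : R) :
  tangents_below k k' -> {for u, continuous k'} -> is_derive u 1 k (k' u).
Proof.
move=> tan k'u; apply/is_derive1_caratheodory.
exists (fun z => if z == u then k' u else (k z - k u) / (z - u)); split.
- move=> z; case: eqP => [->|/eqP zu]; first by rewrite !subrr mulr0.
  by rewrite divfK // subr_eq0.
- apply/cvgrPdist_lt => e e0; rewrite eqxx.
  move/cvgrPdist_lt: k'u => /(_ e e0); apply: filterS => z.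
  case: eqP => [_ _|/eqP zu]; first by rewrite subrr normr0.
  apply: le_lt_trans; have zu0 : z - u != 0 by rewrite subr_eq0.
  have -> : k' u - (k z - k u) / (z - u)
          = (k' u * (z - u) - (k z - k u)) / (z - u) by field.
  rewrite normrM normfV ler_pdivrMr ?normr_gt0 // -normrM.
  have tuz := tan u z; have tzu := tan z u.
  rewrite ler0_norm; last lra.
  rewrite ler0_norm; lra.
- by rewrite eqxx.
Qed.

Lemma is_derive_tangents_below_affine (h h' : R -> R) (a b : R) :
  tangents_below h h' -> continuous h' ->
  is_derive (0 : R) 1 (fun s => h (a + b * s)) (h' a * b).
Proof.
move=> tan h'c.
have := @is_derive_tangents_below (fun s => h (a + b * s))
  (fun s => h' (a + b * s) * b) 0.
rewrite mulr0 addr0; apply.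
- move=> x y; have := tan (a + b * x) (a + b * y).
  by rewrite -mulrA (_ : a + b * y - (a + b * x) = b * (y - x)) //; ring.
- apply: cvgM; last exact: cvg_cst.
  apply: (@continuous_comp _ _ _ (fun s => a + b * s) h'); last exact: h'c.
  by apply: cvgD; [exact: cvg_cst | apply: cvgM; [exact: cvg_cst | exact: cvg_id]].
Qed.

Lemma ln_tangent (x y : R) :
  0 < x -> 0 < y -> ln y <= ln x + (y - x) / x.
Proof.
move=> x0 y0; have yx0 : 0 < y / x by rewrite divr_gt0.
have x0' : x != 0 by rewrite gt_eqF.
rewrite -{1}(divfK x0' y) lnM ?posrE // mulrBl divff //.
have := @le_ln1Dx R (y / x - 1); rewrite (_ : 1 + (y / x - 1) = y / x); lra.
Qed.

Definition phi_slope (u : R) : R := expR (Num.min u 0).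

Definition neg_ln_phi_slope (u : R) : R := - (Num.max u 0 + 1)^-1.

Lemma tangents_below_phi : tangents_below (@phi R) phi_slope.
Proof.
move=> a b; rewrite /phi /phi_slope.
have e1 := expR_ge1Dx (b - a); have ea := expR_gt0 a.
case: (ltP a 0) => a0; case: (ltP b 0) => b0.
- have -> : expR b = expR (b - a) * expR a by rewrite -expRD subrK.
  nra.
- have ea1 : expR a <= 1 by rewrite -expR0 ler_expR ltW.
  have : expR a * expR (- a) = 1 by rewrite -expRD subrr expR0.
  have := expR_ge1Dx (- a); nra.
- rewrite expR0; have := expR_ge1Dx b; lra.
- rewrite expR0; lra.
Qed.

Lemma tangents_below_neg_ln_phi :
  tangents_below (fun u => - ln (phi u)) neg_ln_phi_slope.
Proof.
move=> a b; rewrite /phi /neg_ln_phi_slope.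
case: (ltP a 0) => a0; case: (ltP b 0) => b0; rewrite ?expRK.
- rewrite add0r invr1; lra.
- rewrite add0r invr1.
  have := @le_ln1Dx R b; rewrite (addrC 1 b); lra.
- have := @ln_tangent (a + 1) 1 ltac:(lra) ltac:(lra); rewrite ln1.
  have s0 : 0 < (a + 1)^-1 by rewrite invr_gt0; lra.
  have s1 : (a + 1)^-1 <= 1 by rewrite invf_le1; lra.
  nra.
- have := @ln_tangent (a + 1) (b + 1) ltac:(lra) ltac:(lra).
  rewrite (_ : b + 1 - (a + 1) = b - a); last ring; lra.
Qed.

Lemma continuous_phi_slope : continuous phi_slope.
Proof.
move=> u; apply: (@continuous_comp _ _ _ (fun u : R => Num.min u 0) expR).
  by apply: (@continuous_min _ _ id (cst 0) u); [exact: cvg_id | exact: cvg_cst].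
exact: continuous_expR.
Qed.

Lemma continuous_neg_ln_phi_slope : continuous neg_ln_phi_slope.
Proof.
move=> u; apply: cvgN; apply: cvgV.
  by rewrite gt_eqF // ltr_wpDl // le_max lexx orbT.
apply: cvgD; last exact: cvg_cst.
by apply: (@continuous_max _ _ id (cst 0) u); [exact: cvg_id | exact: cvg_cst].
Qed.

End RealTangents.

Section ParamFunctions.
Context {R : realType} {d m : nat}.
Implicit Types (th l u v w : Param R d m) (F A : Param R d m -> R).

Definition along th (k : PIdx d m) (s : R) : Param R d m :=
  [ffun j => th j + (if j == k then s else 0)].

Lemma pdotDl u v w : pdot (u + v) w = pdot u w + pdot v w.
Proof. by rewrite /pdot -big_split; apply: eq_bigr => k _; rewrite ffunE mulrDl. Qed.

Lemma pdotZl (c : R) u w : pdot (c *: u) w = c * pdot u w.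
Proof. by rewrite /pdot mulr_sumr; apply: eq_bigr => k _; rewrite ffunE mulrA. Qed.

Lemma pdot0l w : pdot 0 w = 0.
Proof. by rewrite /pdot big1 // => k _; rewrite ffunE mul0r. Qed.

Lemma pdotNr u v : pdot u (- v) = - pdot u v.
Proof. by rewrite /pdot -sumrN; apply: eq_bigr => k _; rewrite ffunE mulrN. Qed.

Lemma pdot_along l th k s : pdot l (along th k s - th) = l k * s.
Proof.
rewrite /pdot (bigD1 k) //= big1 ?addr0 => [|j /negbTE jk];
  by rewrite !ffunE ?eqxx ?jk addrC addKr ?mulr0.
Qed.

Definition param_affine A :=
  exists l, forall th th', A th' = A th + pdot l (th' - th).

Lemma param_affine_cst (c : R) : param_affine (fun=> c).
Proof. by exists 0 => th th'; rewrite pdot0l addr0. Qed.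

Lemma param_affine_coord k : param_affine (fun th => th k).
Proof.
exists [ffun j => (j == k)%:R] => th th'.
rewrite /pdot (bigD1 k) //= big1 ?addr0 => [|j /negbTE jk].
  by rewrite !ffunE eqxx mul1r addrC subrK.
by rewrite !ffunE jk mul0r.
Qed.

Lemma param_affineD A1 A2 :
  param_affine A1 -> param_affine A2 -> param_affine (fun th => A1 th + A2 th).
Proof.
move=> [l1 A1l1] [l2 A2l2]; exists (l1 + l2) => th th'.
by rewrite (A1l1 th th') (A2l2 th th') pdotDl addrACA.
Qed.

Lemma param_affineZ (c : R) A : param_affine A -> param_affine (fun th => c * A th).
Proof.
by move=> [l Al]; exists (c *: l) => th th'; rewrite (Al th th') pdotZl mulrDr.
Qed.

Lemma param_affineMr (c : R) A : param_affine A -> param_affine (fun th => A th * c).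
Proof. by under eq_fun do rewrite mulrC; exact: param_affineZ. Qed.

Lemma param_affine_sum (I : Type) (r : seq I) (As : I -> Param R d m -> R) :
  (forall i, param_affine (As i)) -> param_affine (fun th => \sum_(i <- r) As i th).
Proof.
move=> Aa; elim: r => [|i r IH].
  by under eq_fun do rewrite big_nil; exact: param_affine_cst.
by under eq_fun do rewrite big_cons; exact: param_affineD.
Qed.

Definition first_order_convex F :=
  exists G : Param R d m -> Param R d m,
    (forall th k, is_derive (0 : R) 1 (fun s => F (along th k s)) (G th k)) /\
    (forall th th', F th + pdot (G th) (th' - th) <= F th').

Lemma first_order_convex_cst (c : R) : first_order_convex (fun=> c).
Proof.
exists (fun=> 0); split=> [th k|th th']; last by rewrite pdot0l addr0.
by rewrite ffunE; exact: is_derive_cst.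
Qed.

Lemma first_order_convexD F1 F2 : first_order_convex F1 -> first_order_convex F2 ->
  first_order_convex (fun th => F1 th + F2 th).
Proof.
move=> [G1 [dG1 tG1]] [G2 [dG2 tG2]].
exists (fun th => G1 th + G2 th); split=> [th k|th th'].
  by rewrite ffunE; exact: is_deriveD.
by rewrite pdotDl addrACA; apply: lerD.
Qed.

Lemma first_order_convexZ (c : R) F : 0 <= c -> first_order_convex F ->
  first_order_convex (fun th => c * F th).
Proof.
move=> c0 [G [dG tG]]; exists (fun th => c *: G th); split=> [th k|th th'].
  by rewrite ffunE; exact: is_deriveZ.
by rewrite pdotZl -mulrDr ler_wpM2l.
Qed.

Lemma first_order_convex_sum (I : eqType) (r : seq I) (Fs : I -> Param R d m -> R) :
  {in r, forall i, first_order_convex (Fs i)} ->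
  first_order_convex (fun th => \sum_(i <- r) Fs i th).
Proof.
elim: r => [_|i r IH Fc].
  by under eq_fun do rewrite big_nil; exact: first_order_convex_cst.
under eq_fun do rewrite big_cons.
apply: first_order_convexD; first by apply: Fc; rewrite mem_head.
by apply: IH => j jr; apply: Fc; rewrite inE jr orbT.
Qed.

Lemma first_order_convex_comp (h h' : R -> R) A :
  tangents_below h h' -> continuous h' -> param_affine A ->
  first_order_convex (fun th => h (A th)).
Proof.
move=> tan h'c [l Al]; exists (fun th => h' (A th) *: l); split=> [th k|th th'].
  under eq_fun do rewrite (Al th) pdot_along.
  by rewrite ffunE; exact: is_derive_tangents_below_affine.
rewrite pdotZl (_ : pdot l (th' - th) = A th' - A th); first exact: tan.
by rewrite (Al th th') addrAC subrr add0r.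
Qed.

Lemma grad_first_order_convex F : first_order_convex F ->
  forall th th', F th + pdot (grad F th) (th' - th) <= F th'.
Proof.
move=> [G [dG tG]] th th'; suff -> : grad F th = G th by apply: tG.
by apply/ffunP => k; rewrite ffunE /partial derive1E; case: (dG th k) => _ ->.
Qed.

Lemma first_order_convex_convex F : first_order_convex F -> convex_function setT F.
Proof.
move=> [G [_ tG]] t x y _ _; set z := conv t x y.
change (F z <= t%:num * F x + (1 - t%:num) * F y).
have zE k : z k = t%:num * x k + (1 - t%:num) * y k by rewrite /z /= !ffunE.
have subzE u k : (u - z) k = u k - z k by rewrite !ffunE.
have : t%:num * pdot (G z) (x - z) + (1 - t%:num) * pdot (G z) (y - z) = 0.
  rewrite /pdot !mulr_sumr -big_split big1 // => k _.
  by rewrite !subzE zE /=; ring.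
have := tG z x; have := tG z y.
have t0 : 0 <= t%:num by []; have t1 : 0 <= 1 - t%:num by rewrite subr_ge0.
nra.
Qed.

End ParamFunctions.

Section PseudoNetwork.
Context {R : realType}.

Lemma param_affine_pseudo d m (I0 : Init R d m) i (y : nat -> R) :
  param_affine (fun th => pseudo I0 th i y).
Proof.
apply: param_affine_sum => r; apply: param_affineZ.
apply: param_affineD; last exact: param_affine_coord.
apply: param_affineD; last exact: param_affine_cst.
apply: param_affine_sum => k; apply: param_affineMr.
by apply: param_affineD; [exact: param_affine_cst | exact: param_affine_coord].
Qed.

Lemma coordE {d} (x : 'rV[R]_d) (i : 'I_d) : Defs.coord x i = x ord0 i.
Proof. by rewrite /Defs.coord valK. Qed.

Lemma norm_coord_le_norm2 {d} (x : 'rV[R]_d) (i : 'I_d) :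
  `|x ord0 i| <= norm2 x.
Proof.
rewrite -sqrtr_sqr ler_sqrt; last by apply: sumr_ge0 => k _; rewrite sqr_ge0.
by rewrite (bigD1 i) //= lerDl; apply: sumr_ge0 => k _; rewrite sqr_ge0.
Qed.

Lemma Delta_ge0 Q (y : nat -> R) i : -1 <= y i -> 0 <= Delta Q y i.
Proof. by move=> yi; rewrite /Delta divr_ge0 //; lra. Qed.

Lemma first_order_convex_LX d m Q (I0 : Init R d m) (X : seq 'rV[R]_d) :
  (forall x, x \in X -> norm2 x <= 1) -> first_order_convex (LX Q I0 X).
Proof.
move=> X1.
have -> : LX Q I0 X = fun th => (size X)%:R^-1 * \sum_(x <- X) Lx Q I0 th x.
  by apply/funext => th; rewrite /LX mulrC.
apply: first_order_convexZ; first by rewrite invr_ge0.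
apply: first_order_convex_sum => x /X1 x1.
apply: first_order_convex_sum => i _; apply: first_order_convexD.
  apply: first_order_convex_sum => j _; apply: first_order_convexZ.
    apply: Delta_ge0; rewrite coordE.
    by have := norm_coord_le_norm2 x i; rewrite ler_norml; lra.
  apply: first_order_convex_comp tangents_below_phi _ _.
    exact: continuous_phi_slope.
  exact: param_affine_pseudo.
apply: first_order_convex_comp tangents_below_neg_ln_phi _ _.
  exact: continuous_neg_ln_phi_slope.
exact: param_affine_pseudo.
Qed.

End PseudoNetwork.

Theorem lemma17 (R : realType) (d m Q T : nat) (I0 : Init R d m)
  (theta : nat -> Param R d m) (X : seq 'rV[R]_d) :
  (forall x, x \in X -> norm2 x <= 2^-1) ->
  convex_function setT (LX Q I0 X) /\
  (forall (t : nat) (theta_star : Param R d m), (1 <= t <= T)%N ->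
     LX Q I0 X (theta t) - LX Q I0 X theta_star
     <= pdot (grad (LX Q I0 X) (theta t)) (theta t - theta_star)).
Proof.
move=> X_half.
have L_foc : first_order_convex (LX Q I0 X).
  apply: first_order_convex_LX => x /X_half /le_trans; apply.
  by rewrite invf_le1 ?ler1n.
split=> [|t th _]; first exact: first_order_convex_convex.
move/grad_first_order_convex/(_ (theta t) th): L_foc.
rewrite -opprB pdotNr; lra.
Qed.
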